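(* Let $n\ge3$ and let $L^B$ be a blow-up of $L\cong\mathbf{2}^n$ with atoms $q_1,\dots,q_n$ such that $|[q_i]|\ge2$ for every $1\le i\le n$. Then $G(L^B)^{**}=G(L^B)_{SR}$ (same vertex set and same edges).
   Context: Blow-up: for $L\cong\mathbf{2}^n$ with atoms $q_1,\dots,q_n$, replace each $a\in L\setminus\{0,1\}$ by a finite chain $C_a$: $a=a^1\lessdot\cdots\lessdot a^{k_a}$ ($k_a\ge1$), keep $0,1$; elements of one chain are ordered along it, and for $u\in C_a,v\in C_b$ with $a\ne b$ ($C_0=\{0\},C_1=\{1\}$), $u\le v$ iff $a<b$ in $L$. $G(L^B)$ is the zero-divisor graph of $L^B$ (vertices: nonzero elements with a nonzero element meeting them in $0$; adjacency: meet $=0$). For $x\in L^B$, $x^\perp=\{z:x\wedge z=0\}$, $[x]=\{y:y^\perp=x^\perp\}$ (so $[q_i]=C_{q_i}$), classes ordered by $[a]\le[b]$ iff $b^\perp\subseteq a^\perp$, $[a]\wedge[b]=[a\wedge b]$. $G(L^B)^{**}$: vertex set $V(G(L^B))$, distinct $x,y$ adjacent iff $[x]=[y]$, or $[x]\wedge[y]\ne[0]$ with $[x],[y]$ incomparable. In a graph $G$, $u$ is maximally distant from $v$ if $d(v,w)\le d(u,v)$ for all neighbours $w$ of $u$; $u,v$ are mutually maximally distant if each is maximally distant from the other. The boundary $\partial(G)$ is the set of vertices $u$ for which some $v$ is mutually maximally distant with $u$. The strong resolving graph $G_{SR}$ has vertex set $\partial(G)$, distinct $u,v$ adjacent iff they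 are mutually maximally distant in $G$. *)

From mathcomp Require Import all_boot all_order.
Set Implicit Arguments. Unset Strict Implicit. Unset Printing Implicit Defensive.

Section Graph.
Variable T : finType.
Variable e : rel T. (* adjacency; assumed to only relate vertices *)

Fixpoint within (m : nat) (u v : T) : bool :=
  if m is m'.+1 then within m' u v || [exists w, within m' u w && e w v]
  else u == v.

(* graph distance: least m with a walk of length m (shortest paths have
   length < #|T|); unreachable pairs get #|T| (irrelevant for connected graphs) *)
Definition dist (u v : T) : nat := find (fun m => within m u v) (iota 0 #|T|).

Definition maxdist (u v : T) : bool :=
  [forall w, e u w ==> (dist v w <= dist u v)].

Definition mmd (u v : T) : bool := maxdist u v && maxdist v u.

Definition boundary (V : {set T}) : {set T} :=
  [set u in V | [exists v in V, mmd u v]].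

Definition sr_adj (V : {set T}) (u v : T) : bool :=
  [&& u \in boundary V, v \in boundary V, u != v & mmd u v].
End Graph.

(* L = {set 'I_n}; atoms are the singletons.  The chain C_a has length
   kk k a (= k a for a <> 0,1, and 1 for a = 0 or 1); its j-th element
   (j < kk k a) is encoded as the pair (a, j). *)

Definition kk n (k : {set 'I_n} -> nat) (a : {set 'I_n}) : nat :=
  if (a == set0) || (a == setT) then 1 else k a.

Definition kmax n (k : {set 'I_n} -> nat) : nat := \max_(a : {set 'I_n}) kk k a.

Definition carrier n (k : {set 'I_n} -> nat) : finType :=
  ({set 'I_n} * 'I_(kmax k).+1)%type.

Definition LB n (k : {set 'I_n} -> nat) : {set carrier k} :=
  [set x : carrier k | (x.2 : nat) < kk k x.1].

Definition leB n (k : {set 'I_n} -> nat) (x y : carrier k) : bool :=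
  ((x.1 == y.1) && ((x.2 : nat) <= y.2)) || (x.1 \proper y.1).

Definition botB n (k : {set 'I_n} -> nat) : carrier k := (set0, ord0).

Definition is_meet n (k : {set 'I_n} -> nat) (x y w : carrier k) : bool :=
  [&& w \in LB k, leB w x, leB w y &
      [forall z in LB k, (leB z x && leB z y) ==> leB z w]].

Definition perp n (k : {set 'I_n} -> nat) (x : carrier k) : {set carrier k} :=
  [set z in LB k | is_meet x z (botB k)].

Definition cls n (k : {set 'I_n} -> nat) (x : carrier k) : {set carrier k} :=
  [set y in LB k | perp y == perp x].

Definition cle n (k : {set 'I_n} -> nat) (x y : carrier k) : bool :=
  perp y \subset perp x.

Definition cmeet_nz n (k : {set 'I_n} -> nat) (x y : carrier k) : bool :=
  [exists w in LB k, is_meet x y w && (cls w != cls (botB k))].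

Definition ZV n (k : {set 'I_n} -> nat) : {set carrier k} :=
  [set x in LB k | (x != botB k) &&
     [exists z in LB k, (z != botB k) && is_meet x z (botB k)]].

Definition zadj n (k : {set 'I_n} -> nat) (x y : carrier k) : bool :=
  [&& x \in ZV k, y \in ZV k, x != y & is_meet x y (botB k)].

Definition ssadj n (k : {set 'I_n} -> nat) (x y : carrier k) : bool :=
  [&& x \in ZV k, y \in ZV k, x != y &
      (cls x == cls y) ||
      [&& cmeet_nz x y, ~~ cle x y & ~~ cle y x]].

Definition atomB n (k : {set 'I_n} -> nat) (i : 'I_n) : carrier k := ([set i], ord0).

From mathcomp Require Import all_boot all_order.
Set Implicit Arguments. Unset Strict Implicit. Unset Printing Implicit Defensive.

(* Only the L-coordinate [x.1] of an element of L^B matters: [x ∧ z = 0] iff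
   [x.1 ∩ z.1 = ∅], so [x^⊥] and [x] are determined by [x.1], and [x] ≤ [y]
   iff [x.1 ⊆ y.1].  Hence G(L^B) has distance 1 between disjoint supports,
   2 between supports whose union is not everything, and 3 otherwise (through
   complements).  Two distinct vertices are then mutually maximally distant
   exactly when they have equal, or overlapping incomparable, supports: a
   disjoint pair is spoiled by a neighbour strictly below one of them (for an
   atom this is where |[q_i]| ≥ 2 is needed), and a comparable pair by the
   complement of the smaller support.  Every vertex has such a partner, so the
   boundary is the whole vertex set and G(L^B)_SR = G(L^B)^{**}. *)

Lemma withinS (T : finType) (e : rel T) m (u v : T) :
  within e m.+1 u v = within e m u v || [exists w, within e m u w && e w v].
Proof. by []. Qed.

Section BlowUp.

Variables (n : nat) (k : {set 'I_n} -> nat).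
Hypothesis k_gt0 : forall a : {set 'I_n}, a != set0 -> a != setT -> 0 < k a.

Implicit Types (a : {set 'I_n}) (x y z w : carrier k).

Lemma kk_gt0 a : 0 < kk k a.
Proof. by rewrite /kk; case: ifP => // /norP [? ?]; exact: k_gt0. Qed.

Lemma kk_le_kmax a : kk k a <= kmax k.
Proof. exact: (@leq_bigmax _ (kk k)). Qed.

Definition base a : carrier k := (a, ord0).

Lemma base_LB a : base a \in LB k.
Proof. by rewrite inE kk_gt0. Qed.

Lemma botB_LB : botB k \in LB k.
Proof. by rewrite inE /kk eqxx. Qed.

Lemma leB_refl x : leB x x.
Proof. by rewrite /leB eqxx leqnn. Qed.

Lemma leB_subset x y : leB x y -> x.1 \subset y.1.
Proof. by case/orP => [/andP [/eqP -> _] | /proper_sub]. Qed.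

Lemma subset_leB x y : x.1 \subset y.1 -> (x.2 : nat) = 0 -> leB x y.
Proof.
move=> sxy x2; rewrite /leB x2 leq0n andbT.
by case: eqVneq => //= ne; rewrite properEneq ne sxy.
Qed.

Lemma botB_leB x : leB (botB k) x.
Proof. by apply: subset_leB => //; exact: sub0set. Qed.

Lemma LB_set0 x : x \in LB k -> x.1 = set0 -> x = botB k.
Proof.
case: x => a [j lt_j]; rewrite inE /= => hj ea; subst a.
rewrite /kk eqxx /= ltnS leqn0 in hj.
by rewrite /botB; congr pair; apply/val_inj; apply/eqP.
Qed.

Lemma is_meet_botE x z : is_meet x z (botB k) = (x.1 :&: z.1 == set0).
Proof.
rewrite /is_meet botB_LB !botB_leB /=.
apply/forall_inP/idP => [meet0 | /eqP disj w wLB].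
- apply/set0Pn => -[i]; rewrite inE => /andP [ix iz].
  have /implyP := meet0 _ (base_LB [set i]).
  rewrite (@subset_leB (base _) x) ?(@subset_leB (base _) z) ?sub1set //.
  by move=> /(_ isT) /leB_subset; rewrite sub1set inE.
- apply/implyP => /andP [/leB_subset wx /leB_subset wz].
  have w0 : w.1 = set0 by apply/eqP; rewrite -subset0 -disj subsetI wx wz.
  by rewrite (LB_set0 wLB w0) leB_refl.
Qed.

Lemma perpE x : perp x = [set z in LB k | x.1 :&: z.1 == set0].
Proof. by apply/setP => z; rewrite !inE is_meet_botE. Qed.

Lemma cleE x y : cle x y = (x.1 \subset y.1).
Proof.
apply/subsetP/subsetP => [perp_yx i ix | sxy z].
- apply/negPn/negP => iy.
  have : base (~: y.1) \in perp y by rewrite perpE inE base_LB /= setICr.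
  move/perp_yx; rewrite perpE inE => /andP [_ /eqP/setP/(_ i)].
  by rewrite !inE ix iy.
- rewrite !perpE !inE => /andP [-> /eqP yz0] /=.
  by rewrite -subset0 -yz0 setSI //; apply/subsetP.
Qed.

Lemma perp_eq x y : (perp x == perp y) = (x.1 == y.1).
Proof. by rewrite eqEsubset -/(cle y x) -/(cle x y) !cleE eqEsubset andbC. Qed.

Lemma clsE x : cls x = [set y in LB k | y.1 == x.1].
Proof. by apply/setP => y; rewrite !inE perp_eq. Qed.

Lemma cls_eq x y : x \in LB k -> (cls x == cls y) = (x.1 == y.1).
Proof.
move=> xLB; apply/eqP/eqP => [cxy | exy]; last by rewrite !clsE exy.
have : x \in cls x by rewrite clsE inE xLB eqxx.
by rewrite cxy clsE inE => /andP [_ /eqP].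
Qed.

Lemma inZV x : (x \in ZV k) = [&& x \in LB k, x.1 != set0 & x.1 != setT].
Proof.
rewrite inE; case xLB: (x \in LB k) => //=.
apply/andP/andP => [[xb /exists_inP [z zLB /andP [zb]]] | [x0 xT]].
- rewrite is_meet_botE => /eqP xz0; split.
    by apply: contra xb => /eqP x0; apply/eqP; exact: LB_set0.
  apply: contra zb => /eqP xT; apply/eqP; apply: LB_set0 zLB _.
  by rewrite xT setTI in xz0.
- split; first by apply: contra x0 => /eqP ->.
  apply/exists_inP; exists (base (~: x.1)); first exact: base_LB.
  rewrite is_meet_botE setICr eqxx andbT.
  apply: contra xT => /eqP/(congr1 fst) /= xC0.
  by rewrite -[x.1]setCK xC0 setC0.
Qed.

Lemma ZVP x : x \in ZV k -> [/\ x \in LB k, x.1 != set0 & x.1 != setT].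
Proof. by rewrite inZV => /and3P. Qed.

Lemma base_ZV a : a != set0 -> a != setT -> base a \in ZV k.
Proof. by move=> a0 aT; rewrite inZV base_LB a0 aT. Qed.

Lemma base_setC_ZV x : x \in ZV k -> base (~: x.1) \in ZV k.
Proof.
case/ZVP => _ x0 xT; apply: base_ZV.
  by apply: contra xT => /eqP xC0; rewrite -[x.1]setCK xC0 setC0.
by apply: contra x0 => /eqP xCT; rewrite -[x.1]setCK xCT setCT.
Qed.

Lemma zadjE x y : zadj x y = [&& x \in ZV k, y \in ZV k & x.1 :&: y.1 == set0].
Proof.
rewrite /zadj is_meet_botE.
case xZ: (x \in ZV k) => //=; case: (y \in ZV k) => //=.
have [<- | //] := eqVneq x y; case/ZVP: xZ => _ x0 _.
by rewrite setIid (negbTE x0).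
Qed.

Lemma not_leB_subset x y : ~~ leB x y -> ~~ leB y x -> ~~ (x.1 \subset y.1).
Proof.
rewrite /leB properEneq => nxy nyx; apply/negP => sxy.
move: nxy nyx; rewrite sxy andbT; case: eqVneq => [-> | //] /=.
rewrite properxx !orbF -!ltnNge => yx xy.
by have := ltn_trans yx xy; rewrite ltnn.
Qed.

(* Two incomparable elements meet at the top of the chain of [x.1 ∩ y.1]. *)
Lemma is_meet_exists x y : x \in LB k -> y \in LB k ->
  exists2 w, is_meet x y w & x.1 :&: y.1 \subset w.1.
Proof.
move=> xLB yLB.
case lxy: (leB x y).
  exists x; last exact: subsetIl.
  rewrite /is_meet xLB lxy leB_refl /=.
  by apply/forall_inP => z _; apply/implyP => /andP [].
case lyx: (leB y x).
  exists y; last exact: subsetIr.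
  rewrite /is_meet yLB lyx leB_refl /=.
  by apply/forall_inP => z _; apply/implyP => /andP [].
have nsxy := not_leB_subset (negbT lxy) (negbT lyx).
have nsyx := not_leB_subset (negbT lyx) (negbT lxy).
set c := x.1 :&: y.1.
have top_lt : (kk k c).-1 < (kmax k).+1.
  by rewrite ltnS (leq_trans (leq_pred _) (kk_le_kmax _)).
exists (c, Ordinal top_lt); last exact: subxx.
have cx : c \proper x.1.
  by rewrite properEneq subsetIl andbT; apply: contra nsxy => /eqP <-; exact: subsetIr.
have cy : c \proper y.1.
  by rewrite properEneq subsetIr andbT; apply: contra nsyx => /eqP <-; exact: subsetIl.
rewrite /is_meet inE /= ltn_predL kk_gt0 /leB /= cx cy !orbT /=.
apply/forall_inP => z zLB; apply/implyP => /andP [/leB_subset zx /leB_subset zy].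
have zc : z.1 \subset c by rewrite subsetI zx zy.
case: eqVneq => [zc_eq | ne] /=; last by rewrite properEneq ne zc.
move: zLB; rewrite inE zc_eq properxx orbF => lt_z2.
by rewrite -ltnS prednK ?kk_gt0.
Qed.

Lemma cmeet_nzE x y : x \in LB k -> y \in LB k ->
  cmeet_nz x y = (x.1 :&: y.1 != set0).
Proof.
move=> xLB yLB; apply/exists_inP/idP => [[w wLB /andP [mw]] | xy0].
- rewrite (cls_eq _ wLB) /=; case/and4P: mw => _ /leB_subset wx /leB_subset wy _.
  by apply: contra => /eqP xy0; rewrite -subset0 -xy0 subsetI wx wy.
- have [w mw xyw] := is_meet_exists xLB yLB.
  have wLB : w \in LB k by case/and4P: mw.
  exists w => //; rewrite mw (cls_eq _ wLB) /=.
  by apply: contra xy0 => /eqP w0; rewrite -subset0 -w0.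
Qed.

Definition zdist x y : nat :=
  if x == y then 0 else if x.1 :&: y.1 == set0 then 1
  else if x.1 :|: y.1 != setT then 2 else 3.

Lemma zdist_le3 x y : zdist x y <= 3.
Proof. by rewrite /zdist; repeat case: ifP. Qed.

Lemma within1E x y : within (@zadj n k) 1 x y = (x == y) || zadj x y.
Proof.
rewrite withinS; congr orb; apply/existsP/idP => [[w /andP [/eqP <- //]] | xy].
by exists x; rewrite /= eqxx.
Qed.

Lemma within2E x y : x \in ZV k -> y \in ZV k ->
  within (@zadj n k) 2 x y = [|| x == y, zadj x y | x.1 :|: y.1 != setT].
Proof.
move=> xZ yZ; rewrite withinS within1E -orbA; congr orb.
apply/idP/idP => [/orP [-> // | /existsP [w /andP]] | /orP [-> // | xyT]].
- rewrite within1E => -[/orP [/eqP <- -> // | xw] wy]; apply/orP; right.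
  move: xw wy; rewrite !zadjE => /and3P [_ /ZVP [_ /set0Pn [i iw] _] /eqP xw0].
  case/and3P=> _ _ /eqP wy0; apply/eqP => /setP/(_ i).
  move/setP: xw0 => /(_ i); move/setP: wy0 => /(_ i).
  by rewrite !inE iw andbT /= => -> ->.
- (* the complement of x.1 ∪ y.1 is a common neighbour *)
  have wZ : base (~: (x.1 :|: y.1)) \in ZV k.
    case/ZVP: xZ => _ x0 _; apply: base_ZV.
      by apply: contra xyT => /eqP xyC0; rewrite -[_ :|: _]setCK xyC0 setC0.
    apply: contra x0 => /eqP xyCT.
    by rewrite -subset0 -(setCT 'I_n) -xyCT setCK subsetUl.
  apply/orP; right; apply/existsP; exists (base (~: (x.1 :|: y.1))).
  rewrite within1E !zadjE xZ yZ wZ /= setCU; apply/andP; split.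
    by rewrite setIA setICr set0I eqxx orbT.
  by rewrite -setIA [~: y.1 :&: _]setIC setICr setI0.
Qed.

Lemma within3 x y : x \in ZV k -> y \in ZV k -> within (@zadj n k) 3 x y.
Proof.
move=> xZ yZ; rewrite withinS within2E //.
have [xyT | _] := eqVneq (x.1 :|: y.1) setT; last by rewrite !orbT.
(* x -- ~x.1 -- ~y.1 -- y *)
have cxZ := base_setC_ZV xZ; have cyZ := base_setC_ZV yZ.
apply/orP; right; apply/existsP; exists (base (~: y.1)).
apply/andP; split; last by rewrite zadjE cyZ yZ /= setIC setICr.
rewrite withinS; apply/orP; right.
apply/existsP; exists (base (~: x.1)).
by rewrite within1E !zadjE xZ cxZ cyZ /= setICr -setCU xyT setCT !eqxx orbT.
Qed.

Hypothesis n_ge2 : 2 <= n.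

Lemma card_carrier_gt3 : 3 < #|carrier k|.
Proof.
rewrite card_prod card_ord -cardsT -powersetT card_powerset.
rewrite cardsT card_ord (@leq_trans (2 ^ n)) ?leq_pmulr //.
by rewrite (@leq_trans (2 ^ 2)) // leq_pexp2l.
Qed.

Lemma distE x y : x \in ZV k -> y \in ZV k -> dist (@zadj n k) x y = zdist x y.
Proof.
move=> xZ yZ; rewrite /dist.
have -> : iota 0 #|carrier k| = [:: 0; 1; 2; 3] ++ iota 4 (#|carrier k| - 4).
  by rewrite -[[:: 0; 1; 2; 3]]/(iota 0 4) -iotaD subnKC // card_carrier_gt3.
rewrite find_cat; cbn [has find].
rewrite within3 // !orbT within2E // within1E zadjE xZ yZ /=.
rewrite /zdist; case: eqVneq => //= _.
by case: (x.1 :&: y.1 == set0); case: (x.1 :|: y.1 != setT).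
Qed.

Definition ss_support x y : bool :=
  (x.1 == y.1) ||
  [&& x.1 :&: y.1 != set0, ~~ (x.1 \subset y.1) & ~~ (y.1 \subset x.1)].

Lemma ss_supportC x y : ss_support x y = ss_support y x.
Proof. by rewrite /ss_support eq_sym setIC [~~ _ && ~~ _]andbC. Qed.

Lemma maxdist_ss_support x y : x \in ZV k -> y \in ZV k -> x != y ->
  ss_support x y -> maxdist (@zadj n k) x y.
Proof.
move=> xZ yZ xy ssxy; apply/forallP => w; apply/implyP => xw.
move: (xw); rewrite zadjE => /and3P [_ wZ /eqP xw0]; rewrite !distE //.
case/orP: ssxy => [/eqP xy1 | /and3P [xy0 nsxy _]].
  have [_ x0 xT] := ZVP xZ.
  rewrite /zdist (negbTE xy) -xy1 setIid setUid (negbTE x0) xT xw0 eqxx.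
  by case: (_ == w).
rewrite {2}/zdist (negbTE xy) (negbTE xy0); case: ifP => [xyT | _]; last exact: zdist_le3.
have ywT : y.1 :|: w.1 != setT.
  apply: contra nsxy => /eqP ywT; apply/subsetP => i ix.
  have : i \in y.1 :|: w.1 by rewrite ywT inE.
  rewrite inE => /orP [// | iw].
  by move/setP: xw0 => /(_ i); rewrite !inE ix iw.
by rewrite /zdist ywT; case: (y == w) => //; case: (_ == set0).
Qed.

Lemma ssadjE x y :
  ssadj x y = [&& x \in ZV k, y \in ZV k, x != y & ss_support x y].
Proof.
rewrite /ssadj; case xZ: (x \in ZV k) => //=; case yZ: (y \in ZV k) => //=.
have [[xLB _ _] [yLB _ _]] := (ZVP xZ, ZVP yZ).
by rewrite cls_eq // cmeet_nzE // !cleE.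
Qed.

(* Moving from [x] to the complement of the smaller support increases the
   distance to [y] from 2 to 3. *)
Lemma not_maxdist_proper x y : x \in ZV k -> y \in ZV k -> x.1 \proper y.1 ->
  ~~ maxdist (@zadj n k) x y.
Proof.
move=> xZ yZ xy; have [_ x0 _] := ZVP xZ; have cxZ := base_setC_ZV xZ.
have /andP [ne_xy sxy] : (x.1 != y.1) && (x.1 \subset y.1) by rewrite -properEneq.
have [_ [j jy jx]] := properP xy.
apply/forallP => /(_ (base (~: x.1))) /implyP.
rewrite zadjE xZ cxZ /= setICr eqxx => /(_ isT); rewrite !distE //.
have yxT : y.1 :|: ~: x.1 = setT.
  apply/setP => i; rewrite !inE.
  by case: (boolP (i \in x.1)) => [/(subsetP sxy) -> | _]; rewrite ?orbT.
have y_cx : y != base (~: x.1).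
  by apply: contra x0 => /eqP y_eq; rewrite -setCT -yxT y_eq setUid setCK.
have yx0 : y.1 :&: ~: x.1 != set0 by apply/set0Pn; exists j; rewrite !inE jy jx.
have xy' : x != y by apply: contra ne_xy => /eqP ->.
have [_ _ yT] := ZVP yZ.
rewrite /zdist (negbTE y_cx) (negbTE yx0) yxT eqxx (negbTE xy').
by rewrite (setIidPl sxy) (setUidPr sxy) (negbTE x0) yT.
Qed.

Hypothesis cls_atom_ge2 : forall i : 'I_n, 2 <= #|cls (atomB k i)|.

Lemma ZV_below v : v \in ZV k -> exists2 w, w \in ZV k & (w != v) && (w.1 \subset v.1).
Proof.
move=> vZ; have [vLB v0 vT] := ZVP vZ; have /set0Pn [i iv] := v0.
have [vi | ne_vi] := eqVneq v.1 [set i].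
  have : ~~ (cls (atomB k i) \subset [set v]).
    apply: contraL (cls_atom_ge2 i) => /subset_leq_card.
    by rewrite cards1 -ltnNge ltnS.
  case/subsetPn => w; rewrite clsE inE => /andP [wLB /eqP /= wi]; rewrite inE => wv.
  by exists w; rewrite ?inZV ?wLB wi -vi ?v0 ?vT ?wv ?subxx.
exists (base [set i]); last by rewrite sub1set iv andbT; apply: contra ne_vi => /eqP <-.
apply: base_ZV; first by apply/set0Pn; exists i; rewrite inE.
by apply: contra vT => /eqP iT; rewrite eqEsubset subsetT -iT sub1set.
Qed.

Lemma not_maxdist_disjoint x y : x \in ZV k -> y \in ZV k -> x != y ->
  x.1 :&: y.1 == set0 -> ~~ maxdist (@zadj n k) x y.
Proof.
move=> xZ yZ xy /eqP xy0; have [w wZ /andP [wy wsy]] := ZV_below yZ.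
apply/forallP => /(_ w) /implyP; rewrite zadjE xZ wZ -subset0 -xy0 setIS //.
move=> /(_ isT); rewrite !distE // /zdist (negbTE xy) xy0 eqxx eq_sym (negbTE wy).
have [_ w0 _] := ZVP wZ.
by rewrite (setIidPr wsy) (negbTE w0); case: ifP.
Qed.

Lemma mmd_ss_support x y : x \in ZV k -> y \in ZV k -> x != y ->
  mmd (@zadj n k) x y = ss_support x y.
Proof.
move=> xZ yZ xy; rewrite /mmd.
case ssxy: (ss_support x y).
  by rewrite !maxdist_ss_support // 1?eq_sym // ss_supportC.
move: ssxy; rewrite /ss_support => /norP [ne_xy].
have [xy0 _ | xy0 incomp] := eqVneq (x.1 :&: y.1) set0.
  by rewrite (negbTE (not_maxdist_disjoint xZ yZ xy _)) ?xy0.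
have [sxy | nsxy] := boolP (x.1 \subset y.1).
  by rewrite (negbTE (not_maxdist_proper xZ yZ _)) // properEneq ne_xy.
have syx : y.1 \subset x.1 by move: incomp; rewrite nsxy /= negbK.
by rewrite (negbTE (not_maxdist_proper yZ xZ _)) ?andbF // properEneq eq_sym ne_xy.
Qed.

Lemma ss_support_partner u : u \in ZV k ->
  exists2 v, v \in ZV k & (u != v) && ss_support u v.
Proof.
move=> uZ; have [_ u0 uT] := ZVP uZ; have /set0Pn [i iu] := u0.
have [ui | ne_ui] := eqVneq u.1 [set i].
  have [w wZ /andP [wu]] := ZV_below uZ; have [_ w0 _] := ZVP wZ.
  rewrite ui subset1 (negbTE w0) orbF => /eqP wi.
  by exists w; rewrite // eq_sym wu /ss_support wi ui eqxx.
(* i | ~u.1 meets u.1 in i, misses some other i' of u.1 and contains ~u.1 *)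
have /properP [_ [i' iu' i'i]] : [set i] \proper u.1.
  by rewrite properEneq sub1set iu andbT eq_sym.
have /set0Pn [j] : ~: u.1 != set0.
  by apply: contra uT => /eqP uC0; rewrite -[u.1]setCK uC0 setC0.
rewrite inE => ju.
have i'v : i' \notin i |: ~: u.1 by move: i'i; rewrite !inE negb_or iu' andbT.
have vZ : base (i |: ~: u.1) \in ZV k.
  apply: base_ZV; first by apply/set0Pn; exists i; rewrite !inE eqxx.
  by apply: contra i'v => /eqP ->; rewrite inE.
exists (base (i |: ~: u.1)) => //; apply/andP; split.
  by apply: contra i'v => /eqP/(congr1 fst) /= <-.
apply/orP; right; apply/and3P; split.
- by apply/set0Pn; exists i; rewrite !inE iu eqxx.
- by apply/subsetPn; exists i'.
- by apply/subsetPn; exists j; rewrite // !inE ju orbT.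
Qed.

Lemma boundary_ZV : boundary (@zadj n k) (ZV k) = ZV k.
Proof.
apply/setP => u; rewrite inE; case uZ: (u \in ZV k) => //=.
have [v vZ /andP [uv ssuv]] := ss_support_partner uZ.
by apply/exists_inP; exists v; rewrite // mmd_ss_support.
Qed.

End BlowUp.

Theorem mainTheorem8 (n : nat) (k : {set 'I_n} -> nat)
  (hn : 3 <= n)
  (hk : forall a : {set 'I_n}, a != set0 -> a != setT -> 0 < k a)
  (hq : forall i : 'I_n, 2 <= #|cls (atomB k i)|) :
  boundary (@zadj n k) (ZV k) = ZV k /\
  (forall x y : carrier k, ssadj x y = sr_adj (@zadj n k) (ZV k) x y).
Proof.
have n_ge2 : 2 <= n by exact: ltnW.
split; first exact: boundary_ZV.
move=> x y; rewrite ssadjE // /sr_adj boundary_ZV //.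
case xZ: (x \in ZV k) => //=; case yZ: (y \in ZV k) => //=.
by have [// | xy] := eqVneq x y; rewrite mmd_ss_support.
Qed.
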